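(* Let $\phi_1,\phi_2$ be two $n$-qubit stabilizer states. There exists a Clifford unitary $C$ such that $C\ket{\phi_1}=\ket{0^n}$ and $C\ket{\phi_2}\propto\ket{1^a0^b+^{n-a-b}}$ for some $a\in\{0,1\}$ and $0\le b\le n$.
   Context: An $n$-qubit stabilizer state is a state of the form $C\ket{0^n}$ with $C$ an $n$-qubit Clifford unitary. $\ket{+}=2^{-1/2}(\ket{0}+\ket{1})$, and $\ket{1^a0^b+^{c}}$ denotes the product state $\ket{1}^{\otimes a}\otimes\ket{0}^{\otimes b}\otimes\ket{+}^{\otimes c}$. The symbol $\propto$ means equality up to a nonzero scalar factor. *)

(* Complex amplitudes live in an arbitrary numClosedFieldType C
   (e.g. algC, or R[i] for a real closed / real field R). *)
From mathcomp Require Import all_boot all_order all_algebra.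
Import Order.TTheory GRing.Theory Num.Theory.
Local Open Scope ring_scope.

Definition bits (n : nat) := {ffun 'I_n -> bool}.
Definition bxor {n : nat} (x y : bits n) : bits n := [ffun j => x j (+) y j].
Definition bzero (n : nat) : bits n := [ffun _ => false].

Definition qstate (C : numClosedFieldType) (n : nat) := bits n -> C.
Definition qop (C : numClosedFieldType) (n : nat) := bits n -> bits n -> C.

Definition opmul {C : numClosedFieldType} {n : nat} (A B : qop C n) : qop C n :=
  fun x y => \sum_z A x z * B z y.
Definition opadj {C : numClosedFieldType} {n : nat} (A : qop C n) : qop C n :=
  fun x y => (A y x)^*.
Definition opid (C : numClosedFieldType) (n : nat) : qop C n :=
  fun x y => (x == y)%:R.
Definition opapp {C : numClosedFieldType} {n : nat} (A : qop C n) (psi : qstate C n)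
  : qstate C n := fun x => \sum_y A x y * psi y.
Definition op_eq {C : numClosedFieldType} {n : nat} (A B : qop C n) : Prop :=
  forall x y, A x y = B x y.

Definition unitary {C : numClosedFieldType} {n : nat} (U : qop C n) : Prop :=
  op_eq (opmul U (opadj U)) (opid C n) /\ op_eq (opmul (opadj U) U) (opid C n).

(* Pauli group element i^k X^v Z^w :  |y> |-> i^k (-1)^(w.y) |y xor v> *)
Definition pauli (C : numClosedFieldType) {n : nat} (k : nat) (v w : bits n) : qop C n :=
  fun x y => 'i ^+ k * (x == bxor y v)%:R * (-1) ^+ (\sum_(j < n) (w j && y j))%N.

Definition clifford {C : numClosedFieldType} {n : nat} (U : qop C n) : Prop :=
  unitary U /\
  forall (k : nat) (v w : bits n), exists (k' : nat) (v' w' : bits n),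
    op_eq (opmul (opmul U (pauli C k v w)) (opadj U)) (pauli C k' v' w').

Definition basis_state (C : numClosedFieldType) {n : nat} (e : bits n) : qstate C n :=
  fun x => (x == e)%:R.

Definition stabilizer_state {C : numClosedFieldType} {n : nat} (psi : qstate C n) : Prop :=
  exists U : qop C n, clifford U /\ forall x, psi x = opapp U (basis_state C (bzero n)) x.

(* |1^a 0^b +^(n-a-b)> : qubits j < a are |1>, a <= j < a+b are |0>, rest |+> *)
Definition prod_state (C : numClosedFieldType) {n : nat} (a b : nat) : qstate C n :=
  fun x => \prod_(j < n)
    (if (j < a)%N then (x j : nat)%:R
     else if (j < a + b)%N then (~~ x j : nat)%:R
     else (sqrtC (2 : C))^-1).

From mathcomp Require Import all_boot all_order all_algebra perm ring zify.
From Stdlib Require Import FunctionalExtensionality.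
Import GRing.Theory Num.Theory.
Set Implicit Arguments.
Unset Strict Implicit.
Local Open Scope ring_scope.

(* Conjugating by the adjoint of the Clifford preparing [phi1], it suffices to bring
   [psi = W |0^n>] to normal form by a Clifford fixing [|0^n>].  Averaging the
   stabilizers [Z^s] of [|0^n>] conjugated by [W] shows that for any [x, y] in the
   support of [psi] some Pauli [i^k X^(x+y) Z^w] fixes [psi]: the support is an
   affine subspace of [F_2^n], along which [psi (z + x + y) = i^k (-1)^(w.z) psi z].
   An invertible F_2-linear change of coordinates, realised by a Clifford permutation
   fixing [|0^n>], moves the support onto the strings starting with [1^a 0^b], with
   [a = 1] exactly when [0] lies outside it.  The amplitudes on the support are then
   powers of [i] times [psi (1^a 0...0)], and the diagonal operator dividing them out
   is a Clifford fixing [|0^n>], because the ratios are again Pauli phases. *)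

(** * Bit strings and their F_2-linear maps *)

Lemma sub_pid_mxE (F : fieldType) (n r : nat) (y : 'rV[F]_n) :
  (y <= (pid_mx r : 'M_(r, n)))%MS = [forall j : 'I_n, (r <= j)%N ==> (y 0 j == 0)].
Proof.
apply/submxP/forallP => [[D ->] j|h].
  apply/implyP => rj; rewrite mxE big1 // => i _; rewrite mxE.
  by rewrite eqn_leq [(j <= i)%N]leqNgt (leq_trans (ltn_ord i) rj) andbF mulr0.
exists (y *m pid_mx r); rewrite -mulmxA mul_pid_mx !minnn.
apply/rowP => j; rewrite mxE (bigD1 j) //= big1 ?addr0 => [|i /negbTE ne]; last first.
  by rewrite mxE val_eqE ne mulr0.
rewrite mxE eqxx /=; case: ltnP => [_|rj]; first by rewrite mulr1.
by rewrite mulr0; move/implyP: (h j) => /(_ rj) /eqP.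
Qed.

Section BitStrings.
Variable n : nat.
Local Notation F2 := 'F_2.
Implicit Types x y z t u v w : bits n.

Lemma bxorC x y : bxor x y = bxor y x.
Proof. by apply/ffunP => j; rewrite !ffunE addbC. Qed.

Lemma bxorA x y z : bxor x (bxor y z) = bxor (bxor x y) z.
Proof. by apply/ffunP => j; rewrite !ffunE addbA. Qed.

Lemma bxor0r x : bxor x (bzero n) = x.
Proof. by apply/ffunP => j; rewrite !ffunE addbF. Qed.

Lemma bxor0l x : bxor (bzero n) x = x.
Proof. by rewrite bxorC bxor0r. Qed.

Lemma bxorxx x : bxor x x = bzero n.
Proof. by apply/ffunP => j; rewrite !ffunE addbb. Qed.

Lemma bxorK v : cancel (bxor^~ v) (bxor^~ v).
Proof. by move=> x; rewrite -bxorA bxorxx bxor0r. Qed.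

Lemma bxorKl v : cancel (bxor v) (bxor v).
Proof. by move=> x; rewrite bxorA bxorxx bxor0l. Qed.

Lemma bxor_eq x y v : (x == bxor y v) = (bxor x v == y).
Proof. by apply/eqP/eqP => [->|<-]; rewrite bxorK. Qed.

Definition dot w y : nat := \sum_(j < n) (w j && y j).

Lemma dotC w y : dot w y = dot y w.
Proof. by apply: eq_bigr => j _; rewrite andbC. Qed.

Lemma dot0r w : dot w (bzero n) = 0%N.
Proof. by apply: big1 => j _; rewrite ffunE andbF. Qed.

Lemma odd_dot_bxor w x y : odd (dot w (bxor x y)) = odd (dot w x) (+) odd (dot w y).
Proof.
rewrite /dot; apply: (big_rec3 (fun i1 i2 i3 => odd i1 = odd i2 (+) odd i3)) => //.
move=> j s1 s2 s3 _ IH; rewrite ffunE !oddD IH.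
by case: (w j); case: (x j); case: (y j); case: (odd s2); case: (odd s3).
Qed.

Definition unit_bits (i : 'I_n) : bits n := [ffun j => j == i].

Lemma dot_unit_bits w i : dot w (unit_bits i) = w i.
Proof.
rewrite /dot (bigD1 i) //= ffunE eqxx andbT big1 ?addn0 // => j /negbTE ne.
by rewrite ffunE ne andbF.
Qed.

(* The support of [prod_state C a b]. *)
Definition has_prefix (a b : nat) x :=
  [forall j : 'I_n, (j < a + b)%N ==> (x j == (j < a)%N)].

Definition prefix_bits (a : nat) : bits n := [ffun j : 'I_n => (j < a)%N].

Lemma has_prefix_bits a b : has_prefix a b (prefix_bits a).
Proof. by apply/forallP => j; apply/implyP => _; rewrite ffunE. Qed.

Definition clear_prefix (a b : nat) z := [ffun j : 'I_n => ~~ (j < a + b)%N && z j].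

Lemma clear_prefix_bxor a b z v :
  clear_prefix a b (bxor z v) = bxor (clear_prefix a b z) (clear_prefix a b v).
Proof. by apply/ffunP => j; rewrite !ffunE; case: (j < a + b)%N. Qed.

Lemma clear_prefix0 a b : clear_prefix a b (bzero n) = bzero n.
Proof. by apply/ffunP => j; rewrite !ffunE andbF. Qed.

Lemma dot_clear_prefix a b w z : dot w (clear_prefix a b z) = dot (clear_prefix a b w) z.
Proof. by apply: eq_bigr => j _; rewrite !ffunE andbCA andbA. Qed.

Lemma has_prefix_clear a b z : has_prefix a b (bxor (prefix_bits a) (clear_prefix a b z)).
Proof. by apply/forallP => j; apply/implyP => jab; rewrite !ffunE jab /= addbF. Qed.

Lemma bxor_prefix_clear a b x :
  has_prefix a b x -> bxor (prefix_bits a) (clear_prefix a b x) = x.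
Proof.
move=> /forallP xab; apply/ffunP => j; rewrite !ffunE.
case: (ltnP j (a + b)) => [jab|abj] /=.
  by move/implyP: (xab j) => /(_ jab) /eqP ->; rewrite addbF.
by rewrite ltnNge (leq_trans (leq_addr b a) abj).
Qed.

Lemma F2_cases (c : F2) : c = 0 \/ c = 1.
Proof. by case: c => [[|[|//]]] ? ; [left|right]; apply/val_inj. Qed.

Lemma F2_bool_inj : injective (fun b : bool => (b%:R : F2)).
Proof. by case; case => // /(congr1 val). Qed.

Lemma F2_bool_addb (b c : bool) : ((b (+) c)%:R : F2) = b%:R + c%:R.
Proof. by case: b; case: c => //=; apply/val_inj. Qed.

Definition vec x : 'rV[F2]_n := \row_j (x j)%:R.
Definition unvec (r : 'rV[F2]_n) : bits n := [ffun j => r 0 j != 0].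

Lemma vecK : cancel vec unvec.
Proof. by move=> x; apply/ffunP => j; rewrite ffunE mxE; case: (x j). Qed.

Lemma unvecK : cancel unvec vec.
Proof. by move=> r; apply/rowP => j; rewrite mxE ffunE; case: (F2_cases (r 0 j)) => ->. Qed.

Lemma vec_bxor x y : vec (bxor x y) = vec x + vec y.
Proof. by apply/rowP => j; rewrite !mxE ffunE F2_bool_addb. Qed.

Lemma vec0 : vec (bzero n) = 0.
Proof. by apply/rowP => j; rewrite !mxE ffunE. Qed.

Lemma unvecD r s : unvec (r + s) = bxor (unvec r) (unvec s).
Proof. by apply: (can_inj vecK); rewrite vec_bxor !unvecK. Qed.

Lemma unvec0 : unvec 0 = bzero n.
Proof. by rewrite -vec0 vecK. Qed.

Lemma odd_dot_vec w y : ((odd (dot w y))%:R : F2) = (vec y *m (vec w)^T) 0 0.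
Proof.
rewrite -modn2 Fp_nat_mod // natr_sum !mxE; apply: eq_bigr => j _.
by rewrite !mxE -natrM mulnb andbC.
Qed.

Definition linmap (A : 'M[F2]_n) x := unvec (vec x *m A).

Lemma linmap_bxor A x y : linmap A (bxor x y) = bxor (linmap A x) (linmap A y).
Proof. by rewrite /linmap vec_bxor mulmxDl unvecD. Qed.

Lemma linmap0 A : linmap A (bzero n) = bzero n.
Proof. by rewrite /linmap vec0 mul0mx unvec0. Qed.

Lemma linmapM A B x : linmap (A *m B) x = linmap B (linmap A x).
Proof. by rewrite /linmap unvecK mulmxA. Qed.

Lemma linmap1 x : linmap 1%:M x = x.
Proof. by rewrite /linmap mulmx1 vecK. Qed.

Lemma linmapK A : A \in unitmx -> cancel (linmap A) (linmap (invmx A)).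
Proof. by move=> uA x; rewrite -linmapM mulmxV // linmap1. Qed.

Lemma linmapKV A : A \in unitmx -> cancel (linmap (invmx A)) (linmap A).
Proof. by move=> uA x; rewrite -linmapM mulVmx // linmap1. Qed.

Lemma dot_linmap A w : exists w', forall z, odd (dot w (linmap A z)) = odd (dot w' z).
Proof.
exists (unvec (vec w *m A^T)) => z; apply: F2_bool_inj.
by rewrite /= !odd_dot_vec /linmap !unvecK trmx_mul trmxK mulmxA.
Qed.

Lemma linmap_eq1 A : (forall x, linmap A x = x) -> A = 1%:M.
Proof.
move=> h; apply/row_matrixP => i; rewrite !rowE mulmx1.
have -> : delta_mx 0 i = vec (unit_bits i) by apply/rowP => k; rewrite !mxE ffunE eq_sym.
by rewrite -[vec _ *m A]unvecK -/(linmap A _) h.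
Qed.

Lemma linmap_invol_unit A : (forall x, linmap A (linmap A x) = x) -> A \in unitmx.
Proof.
move=> h; have AA : A *m A = 1%:M by apply: linmap_eq1 => x; rewrite linmapM h.
by case: (mulmx1_unit AA).
Qed.

Lemma subgroup_rowspace (V : pred (bits n)) : V (bzero n) ->
  (forall x y, V x -> V y -> V (bxor x y)) ->
  exists M : 'M[F2]_(#|{: bits n}|, n), forall x, V x = (vec x <= M)%MS.
Proof.
move=> V0 VD.
pose M : 'M[F2]_(#|{: bits n}|, n) :=
  \matrix_(i, j) (if V (enum_val i) then vec (enum_val i) 0 j else 0).
have rowM i : row i M = if V (enum_val i) then vec (enum_val i) else 0.
  by apply/rowP => j; rewrite !mxE; case: (V _); rewrite ?mxE.
exists M => x; apply/idP/submxP => [Vx|[u ux]].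
  by exists (delta_mx 0 (enum_rank x)); rewrite -rowE rowM enum_rankK Vx.
rewrite -[x]vecK ux mulmx_sum_row.
apply: (big_ind (fun r => V (unvec r))); first by rewrite unvec0.
  by move=> r s Vr Vs; rewrite unvecD; apply: VD.
move=> i _; rewrite rowM; case: (F2_cases (u 0 i)) => ->; first by rewrite scale0r unvec0.
by rewrite scale1r; case Vi: (V (enum_val i)); rewrite ?vecK ?unvec0.
Qed.

Definition rev_perm : 'S_n := perm rev_ord_inj.

Lemma linmap_rev x : linmap (perm_mx rev_perm) x = [ffun j => x (rev_ord j)].
Proof.
apply/ffunP => j; rewrite /linmap /perm_mx mul_row_perm mulmx1 !ffunE mxE.
have -> : (rev_perm^-1)%g j = rev_ord j.
  by apply: (@perm_inj _ rev_perm); rewrite permKV permE rev_ordK.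
by rewrite mxE; case: (x _).
Qed.

Lemma subgroup_normal_form (V : pred (bits n)) : V (bzero n) ->
  (forall x y, V x -> V y -> V (bxor x y)) ->
  exists A m, [/\ A \in unitmx, (m <= n)%N & forall x, V x = has_prefix 0 m (linmap A x)].
Proof.
move=> V0 VD; have [M VM] := subgroup_rowspace V0 VD.
pose E := row_ebase M; have uE : E \in unitmx by apply: row_ebase_unit.
have fE : row_free E by rewrite row_free_unit.
(* In the coordinates [vec x *m invmx E] the subspace is cut out by the vanishing of
   the last [n - \rank M] of them; reversing the coordinates puts these first. *)
exists (invmx E *m perm_mx rev_perm), (n - \rank M)%N; split=> [||x].
- by rewrite unitmx_mul unitmx_inv uE unitmx_perm.
- exact: leq_subr.
have -> : V x = (vec x *m invmx E <= (pid_mx (\rank M) : 'M_(\rank M, n)))%MS.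
  by rewrite -(submxMfree _ _ fE) mulmxKV // VM -(eq_row_base M).
rewrite sub_pid_mxE linmapM linmap_rev; apply/forallP/forallP => h j; apply/implyP.
  rewrite add0n ffunE /linmap ffunE => jr.
  suff /eqP -> : (vec x *m invmx E) 0 (rev_ord j) == 0 by [].
  by apply: (implyP (h _)); rewrite /=; move: jr (ltn_ord j); lia.
move=> rj; have /implyP := h (rev_ord j); rewrite add0n ffunE rev_ordK /linmap ffunE.
by rewrite eqbF_neg negbK; apply; rewrite /=; move: rj (ltn_ord j); lia.
Qed.

Lemma has_prefix0_bxor a b z :
  has_prefix 0 (a + b) (bxor (prefix_bits a) z) = has_prefix a b z.
Proof.
apply: eq_forallb => j; rewrite add0n !ffunE.
by case: (j < a)%N; case: (z j).
Qed.

Definition transvection (i : 'I_n) u : 'M[F2]_n :=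
  1%:M + \matrix_(k, l) ((k == i)%:R * (u l)%:R).

Lemma linmap_transvection i u x :
  linmap (transvection i u) x = [ffun l => x l (+) (x i && u l)].
Proof.
apply/ffunP => l; rewrite /linmap /transvection mulmxDr mulmx1 !ffunE !mxE.
rewrite (bigD1 i) //= big1 ?addr0 => [|k /negbTE ne]; last by rewrite !mxE ne mul0r mulr0.
rewrite !mxE eqxx mul1r -natrM mulnb.
by case: (x l); case: (x i && u l).
Qed.

Lemma transvection_fix i u x : x i = false -> linmap (transvection i u) x = x.
Proof. by move=> xi; apply/ffunP => l; rewrite linmap_transvection ffunE xi addbF. Qed.

Lemma transvection_unit i u : u i = false -> transvection i u \in unitmx.
Proof.
move=> ui; apply: linmap_invol_unit => x; apply/ffunP => l.
by rewrite !linmap_transvection !ffunE ui; case: (x l); case: (x i); case: (u l).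
Qed.

Lemma has_prefix0_transvection m (i : 'I_n) u x : (i < m)%N -> u i = false ->
  has_prefix 0 m (linmap (transvection i u) x) = has_prefix 0 m x.
Proof.
move=> im ui; case xi : (x i); last by rewrite transvection_fix.
have prefix0_i z : z i -> has_prefix 0 m z = false.
  by move=> zi; apply/negbTE/forallPn; exists i; rewrite add0n im zi.
by rewrite !prefix0_i // linmap_transvection ffunE xi ui.
Qed.

Lemma has_prefix0_transitive m y (j : 'I_n) : (j < m)%N -> y j ->
  exists B, [/\ B \in unitmx, forall x, has_prefix 0 m (linmap B x) = has_prefix 0 m x
              & linmap B y = prefix_bits 1].
Proof.
move=> jm yj; pose i0 : 'I_n := Ordinal (leq_ltn_trans (leq0n j) (ltn_ord j)).
have i0m : (i0 < m)%N by apply: leq_ltn_trans jm.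
suff [T [uT hT yT]] : exists T, [/\ T \in unitmx,
    forall x, has_prefix 0 m (linmap T x) = has_prefix 0 m x & linmap T y i0].
  have [y1 Ty] : exists y1, linmap T y = y1 by eexists.
  rewrite Ty in yT; pose u := bxor y1 (prefix_bits 1).
  have ui0 : u i0 = false by rewrite ffunE yT ffunE.
  exists (T *m transvection i0 u); split=> [|x|].
  - by rewrite unitmx_mul uT transvection_unit.
  - by rewrite linmapM has_prefix0_transvection.
  rewrite linmapM Ty; apply/ffunP => l.
  by rewrite linmap_transvection !ffunE yT; case: (y1 l); case: (l < 1)%N.
case yi0 : (y i0); first by exists 1%:M; split=> [|x|]; rewrite ?unitmx1 ?linmap1.
have uj : unit_bits i0 j = false.
  by rewrite ffunE; apply: contraFF yi0 => /eqP <-.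
exists (transvection j (unit_bits i0)); split=> [|x|].
- exact: transvection_unit.
- exact: has_prefix0_transvection.
by rewrite linmap_transvection !ffunE yj eqxx yi0.
Qed.

Lemma affine_normal_form (S : pred (bits n)) t : S t ->
  (forall x y z, S x -> S y -> S z -> S (bxor z (bxor x y))) ->
  exists A a b, [/\ A \in unitmx, (a <= 1)%N, (a + b <= n)%N
                  & forall x, S x = has_prefix a b (linmap A x)].
Proof.
move=> St SD; pose V v := S (bxor t v).
have V0 : V (bzero n) by rewrite /V bxor0r.
have VD v1 v2 : V v1 -> V v2 -> V (bxor v1 v2).
  move=> V1 V2; have := SD _ _ _ V1 St V2.
  by rewrite /V [bxor t v1]bxorC bxorK -bxorA [bxor v2 _]bxorC.
have SV x : S x = V (bxor t x) by rewrite /V bxorKl.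
have [A [m [uA mn VA]]] := subgroup_normal_form V0 VD.
case S0 : (S (bzero n)).
  have Vt : V t by rewrite /V bxorxx.
  exists A, 0%N, m; split=> // x; rewrite SV -VA.
  by apply/idP/idP => [/(VD _ _ Vt)|]; [rewrite bxorKl | apply: VD].
(* Otherwise move [A t] to [prefix_bits 1] by a linear map preserving [has_prefix 0 m]. *)
have /forallPn [j] : ~~ has_prefix 0 m (linmap A t) by rewrite -VA /V bxorxx S0.
rewrite negb_imply add0n ltn0 eqbF_neg negbK => /andP [jm Atj].
have [B [uB hB Bt]] := has_prefix0_transitive jm Atj.
have m_gt0 : (0 < m)%N by apply: leq_ltn_trans jm.
exists (A *m B), 1%N, m.-1; split=> [|||x].
- by rewrite unitmx_mul uA uB.
- done.
- by rewrite add1n prednK.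
rewrite SV VA -hB !linmap_bxor linmapM Bt {1}(_ : m = 1 + m.-1)%N ?has_prefix0_bxor //.
by rewrite add1n prednK.
Qed.

End BitStrings.

Arguments prefix_bits {n}.
Arguments rev_perm {n}.

(** * Operators, Paulis and Clifford unitaries *)

Lemma sum_delta_l (T : finType) (R : pzSemiRingType) (x : T) (F : T -> R) :
  \sum_z (z == x)%:R * F z = F x.
Proof. by rewrite (bigD1 x) //= eqxx mul1r big1 ?addr0 // => z /negbTE ->; rewrite mul0r. Qed.

Lemma sum_delta_r (T : finType) (R : pzSemiRingType) (x : T) (F : T -> R) :
  \sum_z F z * (z == x)%:R = F x.
Proof. by rewrite (bigD1 x) //= eqxx mulr1 big1 ?addr0 // => z /negbTE ->; rewrite mulr0. Qed.

Lemma sumr_neq0_exists (T : finType) (R : nmodType) (F : T -> R) :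
  \sum_i F i != 0 -> exists i, F i != 0.
Proof.
move=> S0; apply/existsP; apply: contraNT S0 => /existsPn F0.
by rewrite big1 // => i _; apply/eqP/negPn.
Qed.

Section Operators.
Variables (C : numClosedFieldType) (n : nat).
Local Notation bits := (bits n).
Local Notation qop := (qop C n).
Local Notation qstate := (qstate C n).
Local Notation ket0 := (basis_state C (bzero n)).
Implicit Types (A B D U V W : qop) (psi : qstate) (x y z v w : bits).

Lemma Ci_prim : 4.-primitive_root ('i : C).
Proof.
have m1 : (-1 : C) != 1 by rewrite eqNr oner_eq0.
apply/andP; split=> //; apply/forallP => -[[|[|[|[|//]]]] _] /=;
  rewrite unity_rootE ?eqbF_neg ?eqb_id.
- by apply: contraNN m1; rewrite expr1 => /eqP i1; rewrite -sqrCi i1 expr1n.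
- by rewrite sqrCi.
- apply: contraNN m1; rewrite exprS sqrCi mulrN1 eqr_oppLR => /eqP i1.
  by rewrite -sqrCi i1 sqrrN expr1n.
- by rewrite (exprM _ 2 2) sqrCi sqrrN expr1n.
Qed.

Lemma ipow_neq0 k : ('i : C) ^+ k != 0.
Proof. by rewrite expf_neq0 // neq0Ci. Qed.

Lemma ipow_mul3 k : ('i : C) ^+ k * 'i ^+ (3 * k) = 1.
Proof.
by rewrite -exprD -[k in (k + _)%N]mul1n -mulnDl exprM (prim_expr_order Ci_prim) expr1n.
Qed.

Lemma ipow_conj k : (('i : C) ^+ k)^* = 'i ^+ (3 * k).
Proof. by rewrite rmorphXn /= conjCi exprM exprS sqrCi mulrN1. Qed.

Lemma ipow_inv k : (('i : C) ^+ k)^-1 = 'i ^+ (3 * k).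
Proof. by apply: (mulfI (ipow_neq0 k)); rewrite divff ?ipow_neq0 // ipow_mul3. Qed.

Lemma sign_ipow m : (-1 : C) ^+ m = 'i ^+ (2 * m).
Proof. by rewrite exprM sqrCi. Qed.

Lemma pauli_phase_inv k m : ('i ^+ k * (-1) ^+ m : C)^-1 = 'i ^+ (3 * (k + 2 * m)).
Proof. by rewrite sign_ipow -exprD ipow_inv. Qed.

Lemma op_ext A B : op_eq A B -> A = B.
Proof. by move=> AB; do 2 apply: functional_extensionality => ?; apply: AB. Qed.

Lemma opmulA A B D : opmul (opmul A B) D = opmul A (opmul B D).
Proof.
apply: op_ext => x y; rewrite /opmul; under eq_bigr do rewrite mulr_suml.
rewrite exchange_big; apply: eq_bigr => z _; rewrite mulr_sumr.
by apply: eq_bigr => u _; rewrite mulrA.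
Qed.

Lemma opapp_mul A B psi : opapp (opmul A B) psi = opapp A (opapp B psi).
Proof.
apply: functional_extensionality => x; rewrite /opapp /opmul.
under eq_bigr do rewrite mulr_suml.
rewrite exchange_big; apply: eq_bigr => z _; rewrite mulr_sumr.
by apply: eq_bigr => u _; rewrite mulrA.
Qed.

Lemma opmul1l A : opmul (opid C n) A = A.
Proof.
apply: op_ext => x y; rewrite /opmul /opid.
by under eq_bigr do rewrite eq_sym; rewrite sum_delta_l.
Qed.

Lemma opmul1r A : opmul A (opid C n) = A.
Proof. by apply: op_ext => x y; rewrite /opmul /opid sum_delta_r. Qed.

Lemma opapp1 psi : opapp (opid C n) psi = psi.
Proof.
apply: functional_extensionality => x; rewrite /opapp /opid.
by under eq_bigr do rewrite eq_sym; rewrite sum_delta_l.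
Qed.

Lemma opadjK A : opadj (opadj A) = A.
Proof. by apply: op_ext => x y; rewrite /opadj conjCK. Qed.

Lemma opadjM A B : opadj (opmul A B) = opmul (opadj B) (opadj A).
Proof.
apply: op_ext => x y; rewrite /opadj /opmul rmorph_sum /=.
by apply: eq_bigr => z _; rewrite rmorphM /= mulrC.
Qed.

Lemma unitary_adjmul U : unitary U -> opmul (opadj U) U = opid C n.
Proof. by case=> _ /op_ext. Qed.

Lemma unitary_muladj U : unitary U -> opmul U (opadj U) = opid C n.
Proof. by case=> /op_ext. Qed.

Lemma unitary_mul U V : unitary U -> unitary V -> unitary (opmul U V).
Proof.
move=> uU uV; split=> x y; rewrite opadjM.
  by rewrite opmulA -(opmulA V) unitary_muladj // opmul1l unitary_muladj.
by rewrite opmulA -(opmulA (opadj U)) unitary_adjmul // opmul1l unitary_adjmul.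
Qed.

Lemma clifford_mul U V : clifford U -> clifford V -> clifford (opmul U V).
Proof.
move=> [uU cU] [uV cV]; split=> [|k v w]; first exact: unitary_mul.
have [k1 [v1 [w1 /op_ext e1]]] := cV k v w.
have [k2 [v2 [w2 /op_ext e2]]] := cU k1 v1 w1.
exists k2, v2, w2 => x y; rewrite opadjM.
suff -> : opmul (opmul (opmul U V) (pauli C k v w)) (opmul (opadj V) (opadj U))
  = opmul (opmul U (opmul (opmul V (pauli C k v w)) (opadj V))) (opadj U) by rewrite e1 e2.
by rewrite !opmulA.
Qed.

Lemma sign_dot_bxor w x y :
  (-1 : C) ^+ dot w (bxor x y) = (-1) ^+ dot w x * (-1) ^+ dot w y.
Proof. by rewrite -[LHS]signr_odd odd_dot_bxor signr_addb !signr_odd. Qed.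

Lemma sign_dot_bxorl w u y :
  (-1 : C) ^+ dot (bxor w u) y = (-1) ^+ dot w y * (-1) ^+ dot u y.
Proof. by rewrite dotC sign_dot_bxor dotC (dotC u). Qed.

Lemma pauliE k v w x y :
  pauli C k v w x y = 'i ^+ k * (x == bxor y v)%:R * (-1) ^+ dot w y.
Proof. by []. Qed.

Lemma pauli_app k v w psi x :
  opapp (pauli C k v w) psi x = 'i ^+ k * (-1) ^+ dot w (bxor x v) * psi (bxor x v).
Proof.
rewrite /opapp; under eq_bigr do rewrite pauliE bxor_eq eq_sym.
rewrite -(sum_delta_l (bxor x v) (fun y => 'i ^+ k * (-1) ^+ dot w y * psi y)).
by apply: eq_bigr => y _; rewrite -!mulrA mulrCA.
Qed.

(* Encodes the Paulis by a finite type: the phase [i^k] only depends on [k %% 4]. *)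
Definition pauli_of (p : 'I_4 * bits * bits) : qop := pauli C p.1.1 p.1.2 p.2.

Lemma pauli_mod4 k v w : pauli C k v w = pauli_of (inord (k %% 4), v, w).
Proof.
apply: op_ext => x y; rewrite /pauli_of /= !pauliE inordK ?ltn_pmod //.
by rewrite (prim_expr_mod Ci_prim).
Qed.

Lemma pauli_of_inj : injective pauli_of.
Proof.
move=> [[k v] w] [[k' v'] w'] e.
have e0 : pauli_of (k, v, w) v (bzero n) = pauli_of (k', v', w') v (bzero n) by rewrite e.
rewrite /pauli_of /= !pauliE !bxor0l !dot0r !expr0 !mulr1 eqxx mulr1 in e0.
have vv' : v = v'.
  apply/eqP; apply: contraTT (ipow_neq0 k) => /negbTE vv'.
  by rewrite e0 vv' mulr0 eqxx.
subst v'; rewrite eqxx mulr1 in e0.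
have kk' : k = k'.
  apply/val_inj/eqP; move/eqP: e0; rewrite (eq_prim_root_expr Ci_prim).
  by rewrite !modn_small.
subst k'; congr (_, _, _); apply/ffunP => j.
have ej : pauli_of (k, v, w) (bxor (unit_bits j) v) (unit_bits j)
        = pauli_of (k, v, w') (bxor (unit_bits j) v) (unit_bits j) by rewrite e.
rewrite /pauli_of /= !pauliE eqxx mulr1 in ej.
by move/(mulfI (ipow_neq0 k)): ej; rewrite !dot_unit_bits => /signr_inj.
Qed.

(* Conjugation by [U] permutes the finitely many Paulis injectively, hence
   surjectively, so conjugation by the adjoint also maps Paulis to Paulis. *)
Lemma clifford_adj U : clifford U -> clifford (opadj U).
Proof.
move=> [uU cU]; split.
  by split=> x y; rewrite opadjK ?unitary_adjmul ?unitary_muladj.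
pose cj A := opmul (opmul U A) (opadj U).
have cjK A : opmul (opmul (opadj U) (cj A)) U = A.
  suff -> : opmul (opmul (opadj U) (cj A)) U
    = opmul (opmul (opmul (opadj U) U) A) (opmul (opadj U) U).
    by rewrite unitary_adjmul // opmul1l opmul1r.
  by rewrite /cj !opmulA.
have [F cjF] : exists F, forall p, cj (pauli_of p) = pauli_of (F p).
  suff /fin_all_exists : forall p, exists q, cj (pauli_of p) = pauli_of q by [].
  move=> [[k v] w].
  have [k' [v' [w' /op_ext e]]] := cU k v w.
  by exists (inord (k' %% 4), v', w'); rewrite /cj e pauli_mod4.
have injF : injective F.
  move=> p q Fpq; apply: pauli_of_inj.
  by rewrite -(cjK (pauli_of p)) -(cjK (pauli_of q)) !cjF Fpq.
have [G FG GF] := injF_bij injF.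
move=> k v w; set p := (inord (k %% 4) : 'I_4, v, w).
exists (G p).1.1, (G p).1.2, (G p).2 => x y.
by rewrite opadjK pauli_mod4 -/p -[p in pauli_of p]GF -cjF cjK.
Qed.

(** * Supports of stabilizer states *)

Lemma opapp_ket0 U x : opapp U ket0 x = U x (bzero n).
Proof. by rewrite /opapp /basis_state sum_delta_r. Qed.

Lemma sum_sign_dot y :
  \sum_s (-1 : C) ^+ dot s y = (y == bzero n)%:R * #|{: bits}|%:R.
Proof.
have [->|y0] := eqVneq y (bzero n).
  by under eq_bigr do rewrite dot0r expr0; rewrite sumr_const mul1r.
have [j yj] : exists j, y j.
  apply/existsP; move: y0; apply: contraNT => /existsPn y0.
  by apply/eqP/ffunP => j; rewrite ffunE (negbTE (y0 j)).
rewrite mul0r; apply/eqP; rewrite -eqNr -sumrN.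
have shift_inj : injective (bxor^~ (unit_bits j)) := can_inj (bxorK _).
rewrite (reindex_inj shift_inj) /=; apply/eqP/eq_bigr => s _.
by rewrite sign_dot_bxorl (dotC (unit_bits j)) dot_unit_bits yj expr1 mulrN1 opprK.
Qed.

Definition Zop s : qop := pauli C 0 (bzero n) s.

Lemma Zop_ket0 s : opapp (Zop s) ket0 = ket0.
Proof.
apply: functional_extensionality => x; rewrite pauli_app !bxor0r /basis_state.
by case: eqP => [->|]; rewrite ?dot0r ?expr0 ?mulr0 ?mul1r.
Qed.

Lemma sum_Zop z z' :
  \sum_s Zop s z z' = (z == z')%:R * ((z' == bzero n)%:R * #|{: bits}|%:R).
Proof.
under eq_bigr do rewrite /Zop pauliE expr0 mul1r bxor0r.
by rewrite -mulr_sumr sum_sign_dot.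
Qed.

Lemma sum_conj_Zop U x y :
  \sum_s opmul (opmul U (Zop s)) (opadj U) x y
  = #|{: bits}|%:R * opapp U ket0 x * (opapp U ket0 y)^*.
Proof.
rewrite !opapp_ket0 /opmul exchange_big /=.
under eq_bigr do rewrite -mulr_suml exchange_big /=.
under eq_bigr do under eq_bigr do rewrite -mulr_sumr sum_Zop mulrCA.
under eq_bigr do rewrite sum_delta_l -mulrA mulrCA -mulrA.
by rewrite sum_delta_l /opadj; ring.
Qed.

Lemma unitary_ket0_neq0 U : unitary U -> exists t, opapp U ket0 t != 0.
Proof.
move=> uU; have : opapp (opadj U) (opapp U ket0) (bzero n) != 0.
  by rewrite -opapp_mul unitary_adjmul // opapp1 /basis_state eqxx oner_neq0.
by move/sumr_neq0_exists => [t]; rewrite mulf_eq0 negb_or => /andP [_ ?]; exists t.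
Qed.

Definition shift_phase psi v :=
  exists k w, forall z, psi (bxor z v) = 'i ^+ k * (-1) ^+ dot w z * psi z.

Lemma pauli_fixed_shift k v w psi : opapp (pauli C k v w) psi = psi -> shift_phase psi v.
Proof.
move=> Ppsi; exists k, w => z.
by rewrite -{1}Ppsi pauli_app bxorK.
Qed.

(* Some conjugate [U Z^s U^†] of a stabilizer of [|0^n>] has a nonzero [(x, y)] entry;
   it is a Pauli fixing [U |0^n>], and its X-part must be [x + y]. *)
Lemma clifford_ket0_shift U : clifford U -> forall x y,
  opapp U ket0 x != 0 -> opapp U ket0 y != 0 -> shift_phase (opapp U ket0) (bxor x y).
Proof.
move=> [uU cU] x y x0 y0.
have [s Us] : exists s, opmul (opmul U (Zop s)) (opadj U) x y != 0.
  apply: sumr_neq0_exists; rewrite sum_conj_Zop !mulf_neq0 ?conjC_eq0 //.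
  by rewrite pnatr_eq0 -lt0n card_ffun card_bool card_ord expn_gt0.
have [k [v [w /op_ext UZ]]] := cU 0%N (bzero n) s; rewrite -/(Zop s) in UZ.
have -> : bxor x y = v.
  move: Us; rewrite UZ pauliE.
  case: (x =P bxor y v) => [-> _|_]; first by rewrite bxorC bxorKl.
  by rewrite mulr0 mul0r eqxx.
apply: (@pauli_fixed_shift k v w).
by rewrite -UZ !opapp_mul -(opapp_mul (opadj U)) unitary_adjmul // opapp1 Zop_ket0.
Qed.

(** * Clifford permutations and phases *)

Definition permop (f : bits -> bits) : qop := fun x y => (x == f y)%:R.

Lemma permop_app f g psi x : cancel f g -> cancel g f -> opapp (permop f) psi x = psi (g x).
Proof.
move=> fK gK; rewrite /opapp /permop.
by under eq_bigr => y _ do rewrite -(can2_eq gK fK) eq_sym; rewrite sum_delta_l.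
Qed.

Lemma linperm_clifford (M : 'M['F_2]_n) : M \in unitmx -> clifford (permop (linmap M)).
Proof.
move=> uM; set f := linmap M; set g := linmap (invmx M).
have fK : cancel f g := linmapK uM; have gK : cancel g f := linmapKV uM.
split; first split=> x y; rewrite /opmul /opadj /permop /opid.
- under eq_bigr => z _ do rewrite conjC_nat -(can2_eq gK fK) eq_sym.
  by rewrite sum_delta_l gK eq_sym.
- under eq_bigr => z _ do rewrite conjC_nat.
  by rewrite sum_delta_l (inj_eq (can_inj fK)).
move=> k v w; have [w' hw'] := dot_linmap (invmx M) w.
exists k, (f v), w' => x y; rewrite /opmul /opadj /permop.
under eq_bigr => z' _ do under eq_bigr => z _ do rewrite -(can2_eq gK fK) eq_sym.
under eq_bigr => z' _ do rewrite sum_delta_l conjC_nat -(can2_eq gK fK) eq_sym.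
rewrite sum_delta_r !pauliE -signr_odd -/g hw' signr_odd.
by rewrite (can2_eq gK fK) /f linmap_bxor linmapKV.
Qed.

Definition diagop (om : bits -> C) : qop := fun x y => (x == y)%:R * om x.

Lemma diagop_app om psi x : opapp (diagop om) psi x = om x * psi x.
Proof.
rewrite /opapp /diagop; under eq_bigr do rewrite -mulrA eq_sym.
by rewrite sum_delta_l.
Qed.

Lemma diagop_clifford om :
  (forall z, exists m, om z = 'i ^+ m) ->
  (forall v, exists m u, forall z, om (bxor z v) * (om z)^* = 'i ^+ m * (-1) ^+ dot u z) ->
  clifford (diagop om).
Proof.
move=> om_phase om_deriv.
have om_unit z : om z * (om z)^* = 1.
  by have [m ->] := om_phase z; rewrite ipow_conj ipow_mul3.
split.
  split=> x y; rewrite /opmul /opadj /diagop /opid.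
    under eq_bigr do rewrite rmorphM rmorph_nat /= mulrAC -!mulrA eq_sym.
    rewrite sum_delta_l; have [->|_] := eqVneq x y; last by rewrite mul0r.
    by rewrite mul1r mulrC om_unit.
  under eq_bigr do rewrite rmorphM rmorph_nat /= -mulrA.
  rewrite sum_delta_l; have [->|_] := eqVneq x y; last by rewrite mul0r mulr0.
  by rewrite mul1r mulrC om_unit.
move=> k v w; have [m [u hu]] := om_deriv v.
exists (k + m)%N, v, (bxor w u) => x y; rewrite /opmul /opadj /diagop.
under eq_bigr do under eq_bigr do rewrite -mulrA eq_sym.
under eq_bigr do rewrite sum_delta_l rmorphM rmorph_nat /= mulrCA eq_sym.
rewrite sum_delta_l !pauliE sign_dot_bxorl exprD.
case: (x =P bxor y v) => [->|_]; last by rewrite /=; ring.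
rewrite /= mulr1n !mulr1.
transitivity ('i ^+ k * (-1) ^+ dot w y * (om (bxor y v) * (om y)^*)); first by ring.
by rewrite hu; ring.
Qed.

(** * Normal form *)

(* [om] divides out the amplitude at [pi z], the point of the support that agrees
   with [z] outside the first [a + b] coordinates. *)
Lemma phase_flatten psi a b :
  (forall x y, psi x != 0 -> psi y != 0 -> shift_phase psi (bxor x y)) ->
  (forall x, (psi x != 0) = has_prefix a b x) ->
  exists om, [/\ clifford (diagop om), om (bzero n) = 1
               & forall x, om x * psi x = (has_prefix a b x)%:R * psi (prefix_bits a)].
Proof.
move=> psi_shift psi_supp; set r : bits := prefix_bits a.
pose pi z := bxor r (clear_prefix a b z).
have pi_supp z : psi (pi z) != 0 by rewrite psi_supp has_prefix_clear.
have r_supp : psi r != 0 by rewrite psi_supp has_prefix_bits.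
have shift_r z : exists k w, forall u,
    psi (bxor u (clear_prefix a b z)) = 'i ^+ k * (-1) ^+ dot w u * psi u.
  by have := psi_shift _ _ (pi_supp z) r_supp; rewrite /pi [bxor _ r]bxorC bxorKl.
pose om z := psi r / psi (pi z).
have om_phase z : exists m, om z = 'i ^+ m.
  have [k [w hk]] := shift_r z; exists (3 * (k + 2 * dot w r))%N.
  by rewrite /om /pi hk invfM mulrCA divff // mulr1 pauli_phase_inv.
exists om; split=> [||x].
- apply: diagop_clifford => // v; have [k [w hk]] := shift_r v.
  exists (3 * (k + 2 * dot w r))%N, (clear_prefix a b w) => z.
  have [m om_z] := om_phase z; rewrite om_z ipow_conj -ipow_inv -om_z.
  have Pz := pi_supp z; rewrite /pi in Pz.
  rewrite /om /pi clear_prefix_bxor bxorA hk sign_dot_bxor dot_clear_prefix.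
  rewrite -pauli_phase_inv -[(-1) ^+ dot _ z in RHS]invr_sign.
  by field; rewrite ?Pz ?r_supp ?ipow_neq0 ?signr_eq0.
- by rewrite /om /pi clear_prefix0 bxor0r divff.
have [xab|] := boolP (has_prefix a b x).
  by rewrite /om /pi bxor_prefix_clear // mulfVK ?psi_supp // mul1r.
by rewrite -psi_supp negbK => /eqP ->; rewrite mulr0 mul0r.
Qed.

Lemma prod_stateE a b : exists2 K : C, K != 0 &
  forall x, prod_state C a b x = (has_prefix a b x)%:R * K.
Proof.
pose k (j : 'I_n) : C := if (j < a + b)%N then 1 else (sqrtC 2)^-1.
exists (\prod_j k j).
  rewrite prodf_seq_neq0; apply/allP => j _; rewrite /k.
  by case: ifP; rewrite ?oner_neq0 ?invr_eq0 ?sqrtC_eq0 ?pnatr_eq0.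
move=> x; pose p (j : 'I_n) := (j < a + b)%N ==> (x j == (j < a)%N).
have factorE (j : 'I_n) : (if (j < a)%N then (x j : nat)%:R
                 else if (j < a + b)%N then (~~ x j : nat)%:R else (sqrtC 2)^-1)
                 = (p j)%:R * k j.
  rewrite /p /k; case: (ltnP j a) => [ja|aj].
    by rewrite (leq_trans ja (leq_addr b a)) mulr1; case: (x j).
  by case: (j < a + b)%N; rewrite ?mul1r ?mulr1 //; case: (x j).
transitivity (\prod_j ((p j)%:R * k j)); first exact: eq_bigr.
case: (boolP (has_prefix a b x)) => [/forallP px|/forallPn [j pj]].
  by rewrite mul1r; apply: eq_bigr => j _; rewrite /p px mul1r.
by rewrite mul0r (bigD1 j) //= /p (negbTE pj) !mul0r.
Qed.

Lemma support_normal_form W : clifford W ->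
  exists M a b, [/\ M \in unitmx, (a <= 1)%N, (a + b <= n)%N
    & forall x, (opapp (opmul (permop (linmap M)) W) ket0 x != 0) = has_prefix a b x].
Proof.
move=> cW; set psi := opapp W ket0.
have [t psi_t] := unitary_ket0_neq0 cW.1.
have psi_affine x y z :
    psi x != 0 -> psi y != 0 -> psi z != 0 -> psi (bxor z (bxor x y)) != 0.
  move=> x0 y0 z0; rewrite /psi; have [k [w ->]] := clifford_ket0_shift cW x0 y0.
  by rewrite !mulf_neq0 ?ipow_neq0 ?signr_eq0.
have [M [a [b [uM a1 abn hM]]]] := affine_normal_form psi_t psi_affine.
exists M, a, b; split=> // x.
by rewrite opapp_mul (permop_app _ _ (linmapK uM) (linmapKV uM)) hM linmapKV.
Qed.

Lemma clifford_normal_form W : clifford W ->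
  exists V, [/\ clifford V, opapp V ket0 = ket0 &
    exists a b (c : C), [/\ (a <= 1)%N, (a + b <= n)%N, c != 0
      & forall x, opapp V (opapp W ket0) x = c * prod_state C a b x]].
Proof.
move=> cW; have [M [a [b [uM a1 abn supp]]]] := support_normal_form cW.
set P := permop (linmap M); have cP : clifford P := linperm_clifford uM.
have cPW : clifford (opmul P W) by apply: clifford_mul.
have [om [cD om0 hom]] := phase_flatten (@clifford_ket0_shift _ cPW) supp.
have [K K0 prodE] := prod_stateE a b.
set c := opapp (opmul P W) ket0 (prefix_bits a).
exists (opmul (diagop om) P); split.
- exact: clifford_mul.
- apply: functional_extensionality => x.
  rewrite opapp_mul diagop_app (permop_app _ _ (linmapK uM) (linmapKV uM)) /basis_state.
  have [->|x0] := eqVneq x (bzero n); first by rewrite linmap0 eqxx om0 mulr1.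
  by rewrite (can2_eq (linmapKV uM) (linmapK uM)) linmap0 (negbTE x0) mulr0.
exists a, b, (c / K); split=> // [|x].
- by rewrite mulf_neq0 ?invr_eq0 // /c supp has_prefix_bits.
by rewrite opapp_mul diagop_app -opapp_mul hom prodE mulrCA divfK // mulrC.
Qed.

End Operators.

Theorem lemma2 (C : numClosedFieldType) (n : nat) (phi1 phi2 : qstate C n) :
  stabilizer_state phi1 -> stabilizer_state phi2 ->
  exists U : qop C n, clifford U /\
    (forall x, opapp U phi1 x = basis_state C (bzero n) x) /\
    exists (a b : nat) (c : C),
      [/\ (a <= 1)%N, (b <= n)%N, (a + b <= n)%N, c != 0 &
          forall x, opapp U phi2 x = c * prod_state C a b x].
Proof.
move=> [U1 [cU1 /functional_extensionality ->]] [U2 [cU2 /functional_extensionality ->]].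
have cW := clifford_mul (clifford_adj cU1) cU2.
have [V [cV V0 [a [b [c [a1 abn c0 hV]]]]]] := clifford_normal_form cW.
exists (opmul V (opadj U1)); split; first exact: clifford_mul cV (clifford_adj cU1).
split=> [x|].
  by rewrite !opapp_mul -(opapp_mul (opadj U1)) unitary_adjmul ?opapp1 ?V0 //; case: cU1.
exists a, b, c; split=> //; first by apply: leq_trans abn; apply: leq_addl.
by move=> x; rewrite !opapp_mul -hV opapp_mul.
Qed.
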